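(* For every natural number $n\geq 2$, the Alexandroff $n$-plicate $D_n(2^{\mathbb{N}})$ is a Rosenthal compactum which is premetric of degree at most $n$ but is not premetric of degree at most $n-1$.
   Context: A Rosenthal compactum is a topological space homeomorphic to a compact subset of $\mathcal{B}_1(\mathbb{N}^{\mathbb{N}})$, the space of first Baire class real functions on $\mathbb{N}^{\mathbb{N}}$ with the pointwise topology. A compact space $K$ is premetric of degree at most $m$ if there is a continuous surjection $f:K\to M$ onto a metrizable compact space $M$ with $|f^{-1}(x)|\leq m$ for all $x\in M$. For $n\geq 2$ and a Hausdorff space $X$, the Alexandroff $n$-plicate $D_n(X)$ is the set $X\times\{0,\ldots,n-1\}$ with the topology in which the points $(x,i)$ with $i\in\{1,\ldots,n-1\}$ are isolated and a point $(x,0)$ has basic neighbourhoods $\mathscr{U}\times\{0,\ldots,n-1\}\setminus\{(x,i):1\leq i\leq n-1\}$, where $\mathscr{U}$ ranges over neighbourhoods of $x$ in $X$. $2^{\mathbb{N}}$ is the Cantor space. *)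

From HB Require Import structures.
From mathcomp Require Import all_boot all_order all_algebra.
From mathcomp Require Import all_classical all_reals all_analysis.
Set Implicit Arguments. Unset Strict Implicit. Unset Printing Implicit Defensive.
Import Order.TTheory GRing.Theory Num.Theory.
Import numFieldTopology.Exports numFieldNormedType.Exports.
Local Open Scope classical_set_scope.

Definition baire_space : Type := prod_topology (fun _ : nat => nat).
HB.instance Definition _ := Choice.on baire_space.
HB.instance Definition _ := Topological.on baire_space.

Definition baire_class1 (R : realType) (f : baire_space -> R) : Prop :=
  exists g : nat -> baire_space -> R,
    (forall k : nat, continuous (g k)) /\
    (forall x : baire_space, ((fun k : nat => g k x) @ \oo) --> f x).

(** K is homeomorphic to a compact subset of B_1(N^N) with the pointwise
    topology (the function space carries the product topology). *)
Definition rosenthal_compactum (R : realType) (K : topologicalType) : Prop :=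
  exists e : K -> {ptws baire_space -> R},
    [/\ injective e, continuous e,
        (forall U : set K, open U ->
           exists V : set {ptws baire_space -> R}, open V /\ e @` U = range e `&` V),
        compact (range e)
      & forall x, baire_class1 (e x : baire_space -> R)].

Definition premetric_le (R : realType) (K : topologicalType) (m : nat) : Prop :=
  exists (M : pseudoMetricType R) (f : K -> M),
    [/\ hausdorff_space M, compact [set: M], continuous f,
        set_surj [set: K] [set: M] f
      & forall y : M, (f @^-1` [set y] #<= `I_m)%card].

Definition nplicate (n : nat) (X : topologicalType) : Type := (X * 'I_n)%type.

HB.instance Definition _ n (X : topologicalType) := Choice.on (nplicate n X).

Definition nplicate_open (n : nat) (X : topologicalType) (U : set (nplicate n X)) :=
  forall (x : X) (i : 'I_n), nat_of_ord i = 0%N -> U (x, i) ->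
    exists W : set X, nbhs x W /\
      (forall (y : X) (j : 'I_n), W y -> (y <> x \/ nat_of_ord j = 0%N) -> U (y, j)).

Lemma nplicate_openT n X : @nplicate_open n X setT.
Proof. by move=> x i _ _; exists setT; split => //; exact: filterT. Qed.

Lemma nplicate_openI n X : setI_closed (@nplicate_open n X).
Proof.
move=> A B oA oB x i i0 [Ax Bx].
have [WA [nA hA]] := oA x i i0 Ax; have [WB [nB hB]] := oB x i i0 Bx.
exists (WA `&` WB); split; first exact: filterI.
by move=> y j [? ?] h; split; [exact: hA|exact: hB].
Qed.

Lemma nplicate_open_bigU n X (I : Type) (f : I -> set (nplicate n X)) :
  (forall i, nplicate_open (f i)) -> nplicate_open (\bigcup_i f i).
Proof.
move=> hf x i i0 [k _ fk].
have [W [nW hW]] := hf k x i i0 fk.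
by exists W; split => // y j Wy h; exists k => //; exact: hW.
Qed.

HB.instance Definition _ n (X : topologicalType) :=
  isOpenTopological.Build (nplicate n X)
    (@nplicate_openT n X) (@nplicate_openI n X) (@nplicate_open_bigU n X).

From HB Require Import structures.
From mathcomp Require Import all_boot all_order all_algebra.
From mathcomp Require Import all_classical all_reals all_analysis.
Set Implicit Arguments. Unset Strict Implicit. Unset Printing Implicit Defensive.
Import Order.TTheory GRing.Theory Num.Theory.
Import numFieldTopology.Exports numFieldNormedType.Exports.
Local Open Scope classical_set_scope.
Local Open Scope ring_scope.

(* The first projection D_n(2^N) -> 2^N is continuous and n-to-1, which gives
   degree at most n.  Conversely, let f : D_n(2^N) -> M be continuous into a
   metric space.  Continuity at (w, 0) forces f(y, i) to be e-close to
   f(y, 0) for all y <> w near w, so the points whose fibre {f(y, i) | i}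
   has diameter at least e form a set meeting a small cylinder around any
   point in at most that point.  A nested-cylinder (Baire category) argument
   yields a point x outside all these sets for e = 1/(k+1); then f identifies
   all n points above x and has a fibre of size n.
   For the Rosenthal property, (x, i) is sent to t |-> x(t 0) + i [t = x] on
   N^N: a continuous injection of the compact space D_n(2^N) into B_1(N^N),
   the indicator of a point being the limit of indicators of shrinking
   cylinders. *)

Section Nplicate.
Variables (X : topologicalType) (m : nat).
Local Notation D := (nplicate m.+1 X).

Lemma nplicate_nbhs0 (x : X) (A : set D) : nbhs ((x, ord0) : D) A ->
  exists2 W : set X, nbhs x W &
    forall y j, W y -> y <> x \/ j = ord0 -> A (y, j).
Proof.
rewrite (nbhsE ((x, ord0) : D)) => -[B [oB Bx] BA].
have [W [nW hW]] := oB x ord0 erefl Bx.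
exists W => // y j Wy yj; apply/BA/hW => //.
by case: yj => [|->]; [left|right].
Qed.

Lemma nplicate_nbhs0P (x : X) (A : set D) :
  hausdorff_space X ->
  nbhs ((x, ord0) : D) A <->
  exists2 W : set X, nbhs x W &
    forall y j, W y -> y <> x \/ j = ord0 -> A (y, j).
Proof.
move=> hX; split; first exact: nplicate_nbhs0.
case=> W nW hW; rewrite (nbhsE ((x, ord0) : D)).
exists [set p : D | W° p.1 /\ (p.1 <> x \/ p.2 = ord0)]; last first.
  by move=> [y j] /= [/interior_subset Wy]; exact: hW.
split; last by split; [exact: nbhs_singleton (nbhs_interior nW)|right].
move=> y i _ [Wy _].
have oW : open W° := @open_interior _ W.
have [->|yx] := pselect (y = x).
  exists W°; split; first exact: open_nbhs_nbhs.
  by move=> z j Wz [zx|j0]; split => //; [left|right; exact: ord_inj].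
have x_closed : closed [set x].
  exact/accessible_closed_set1/hausdorff_accessible.
exists (W° `&` ~` [set x]); split; last by move=> z j [Wz zx] _; split => //; left.
apply: filterI; first exact: open_nbhs_nbhs.
by apply: open_nbhs_nbhs; split => //; exact: closed_openC.
Qed.

Lemma nplicate_open_isolated (x : X) (i : 'I_m.+1) :
  i != ord0 -> open [set ((x, i) : D)].
Proof.
move=> i0; suff : nplicate_open [set ((x, i) : D)] by [].
move=> y j j0 [_ ji]; move: i0; rewrite -ji.
by have -> : j = ord0 by exact: ord_inj.
Qed.

Lemma nplicate_continuous (Y : topologicalType) (g : D -> Y) :
  hausdorff_space X ->
  (forall x V, nbhs (g (x, ord0)) V -> exists2 W : set X, nbhs x W &
     forall y j, W y -> y <> x \/ j = ord0 -> V (g (y, j))) ->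
  continuous g.
Proof.
move=> hX gc [x i] V; have [->|i0] := eqVneq i ord0 => /= nV.
  by apply/(nplicate_nbhs0P _ _ hX); exact: gc.
have : nbhs ((x, i) : D) [set (x, i)].
  by apply: open_nbhs_nbhs; split => //; exact: nplicate_open_isolated.
by apply: filterS => _ ->; exact: nbhs_singleton nV.
Qed.

Lemma nplicate_compact : compact [set: X] -> compact [set: D].
Proof.
move=> cX F PF _.
have [x [_ clx]] := cX _ (fmap_proper_filter fst PF) (filterT : (fst @ F) setT).
have [[i [i0 Fi]]|] :=
  pselect (exists i : 'I_m.+1, i != ord0 /\ forall A, F A -> A (x, i)).
  exists (x, i); split => // A B FA nB.
  by exists (x, i); split; [exact: Fi|exact: nbhs_singleton nB].
move=> noclus.
have avoid i : exists B : set D, F B /\ (i != ord0 -> ~ B (x, i)).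
  have [->|i0] := eqVneq i ord0; first by exists setT; split => //; exact: filterT.
  apply: contrapT => nB; apply: noclus; exists i; split => // A FA.
  by apply: contrapT => nA; apply: nB; exists A.
have [Bf hBf] := choice avoid.
exists (x, ord0); split => // A B FA /nplicate_nbhs0[W nW hW].
pose C := A `&` [set p | forall i, Bf i p].
have FC : F C by apply: filterI => //; apply: filter_forall => i; exact: (hBf i).1.
have FfC : (fst @ F) (fst @` C) by apply: (@filterS _ _ _ C) => // p Cp; exists p.
have [_ [[[y j] Cyj <-] Wy]] := clx _ _ FfC nW.
exists (y, j); split; first exact: Cyj.1.
apply: hW => //=; have [->|j0] := eqVneq j ord0; first by right.
by left => yx; move: Cyj => [_ /(_ j)]; rewrite yx; exact: (hBf j).2.
Qed.

Lemma nplicate_fibre_card (T : Type) (f : D -> T) (x : X) :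
  (forall i, f (x, i) = f (x, ord0)) ->
  (`I_m.+1 #<= f @^-1` [set f (x, ord0)])%card.
Proof.
move=> fx; apply: (@card_le_trans _ _ _ ((fun k : nat => ((x, inord k) : D)) @` `I_m.+1)).
  rewrite (card_le_eqr (inj_card_eq _)) // => a b.
  by rewrite !inE /= => aI bI [] /(congr1 val); rewrite /= !inordK.
by apply: subset_card_le => _ [k _ <-]; exact: fx.
Qed.

Lemma nplicate_fst_fibre_card (x : X) :
  ((fst : D -> X) @^-1` [set x] #<= `I_m.+1)%card.
Proof.
apply: (@card_le_trans _ _ _ ((fun k : nat => ((x, inord k) : D)) @` `I_m.+1)).
  apply: subset_card_le => -[y i] /= yx; exists (nat_of_ord i); first exact: ltn_ord.
  by rewrite inord_val yx.
exact: card_image_le.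
Qed.

End Nplicate.

Lemma nplicate_premetric (R : realType) (X : pseudoMetricType R) (m : nat) :
  hausdorff_space X -> compact [set: X] -> premetric_le R (nplicate m.+1 X) m.+1.
Proof.
move=> hX cX; exists X, fst; split => //.
- by apply: nplicate_continuous => // x V nV; exists V.
- by move=> x _; exists (x, ord0).
- exact: nplicate_fst_fibre_card.
Qed.

Lemma nplicate_continuous_ball (R : realType) (X : topologicalType)
    (M : pseudoMetricType R) (m : nat) (f : nplicate m.+1 X -> M) (x : X) (e : R) :
  continuous f -> 0 < e -> exists2 W : set X, nbhs x W &
    forall y, W y -> y <> x -> forall i, ball (f (y, ord0)) e (f (y, i)).
Proof.
move=> cf e0.
have /cf/nplicate_nbhs0[W nW hW] : nbhs (f (x, ord0)) (ball (f (x, ord0)) (e / 2)).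
  by apply: nbhsx_ballx; rewrite divr_gt0.
exists W => // y Wy yx i; apply: (@ball_splitl _ _ (f (x, ord0))); apply: ball_sym.
  by apply: (hW y ord0) => //; right.
by apply: (hW y i) => //; left.
Qed.

Definition prefix_eq (T : Type) (L : nat) (a b : nat -> T) :=
  forall k, (k < L)%N -> a k = b k.

Lemma nbhs_baire_prefix (t : baire_space) (L : nat) :
  nbhs t [set s | prefix_eq L s t].
Proof.
elim: L => [|L IH]; first by apply: filterS filterT => s _ k.
have tL : nbhs t [set s : baire_space | s L = t L].
  exact: (@proj_continuous nat (fun _ => nat) L t _ (discrete_set1 (t L))).
apply: filterS (filterI IH tL) => s [st stL] k.
by rewrite ltnS leq_eqVlt => /orP[/eqP ->|/st].
Qed.

Lemma cantor_nbhs_prefix (x : cantor_space) (W : set cantor_space) :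
  nbhs x W -> exists L, forall y, prefix_eq L y x -> W y.
Proof.
move=> nW; apply: contrapT => /forallNP noL.
have /choice[ys hys] : forall L, exists y : cantor_space, prefix_eq L y x /\ ~ W y.
  move=> L; have /existsNP[y /not_implyP[yx nWy]] := noL L.
  by exists y.
have ys_cvg : ys @ \oo --> (x : cantor_space).
  apply/(@pointwise_cvgP nat bool) => k.
  by apply: cvg_near_cst; exists k.+1 => // L /= kL; exact: (hys L).1.
have [L _ WL] := ys_cvg _ nW.
exact: (hys L).2 (WL L (leqnn L)).
Qed.

Lemma prefix_nested_limit (T : Type) (L : nat -> nat) (z : nat -> nat -> T) :
  (forall k, L k < L k.+1)%N -> (forall k, prefix_eq (L k) (z k) (z k.+1)) ->
  exists x, forall k, prefix_eq (L k) x (z k).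
Proof.
move=> Lincr zS.
have Lmono : {homo L : a b / (a <= b)%N}.
  by apply: homo_leq => [//|b a c|k]; [exact: leq_trans|exact: ltnW].
have Lge k : (k <= L k)%N.
  by elim: k => // k IH; apply: leq_ltn_trans IH (Lincr k).
have zchain a b : (a <= b)%N -> prefix_eq (L a) (z a) (z b).
  move=> /subnK <-; elim: (b - a)%N => // d IH j ja.
  by rewrite IH // addSn zS //; apply: leq_trans ja (Lmono _ _ (leq_addl _ _)).
exists (fun j => z j.+1 j) => k j jk.
have [kj|jk'] := leqP k j.+1; first by rewrite (zchain _ _ kj).
by rewrite (zchain _ _ (ltnW jk')) //; exact: Lge.
Qed.

Lemma cantor_avoid (B : nat -> set cantor_space) :
  (forall k w, exists L, forall y, prefix_eq L y w -> y <> w -> ~ B k y) ->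
  exists x, forall k, ~ B k x.
Proof.
move=> Bsparse.
have /choice[next hnext] : forall kp : nat * (nat * cantor_space),
    exists p : nat * cantor_space, [/\ (kp.2.1 < p.1)%N, prefix_eq kp.2.1 kp.2.2 p.2
      & forall y, prefix_eq p.1 y p.2 -> ~ B kp.1 y].
  move=> [k [L z]] /=; have [L0 hL0] := Bsparse k z; set N := maxn L L0.
  (* Flipping bit N keeps the new cylinder away from z, the one point that
     may lie in B k near z. *)
  exists (N.+1, fun j => if j == N then ~~ z j else z j) => /=; split.
  - by rewrite ltnS leq_maxl.
  - by move=> j jL; rewrite ifN // neq_ltn (leq_trans jL (leq_maxl _ _)).
  - move=> y yz; apply: (hL0 y) => [j jL0|yeqz].
      have jN : (j < N)%N := leq_trans jL0 (leq_maxr _ _).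
      by rewrite yz ?ifN ?neq_ltn ?jN //; exact: ltnW.
    by have := yz N (ltnSn N); rewrite eqxx yeqz; case: (z N).
pose s := fix s (k : nat) : nat * cantor_space :=
  if k is k'.+1 then next (k', s k') else (0%N, fun _ => false).
have [x xs] : exists x, forall k, prefix_eq (s k).1 x (s k).2.
  by apply: prefix_nested_limit => k; have [] := hnext (k, s k).
exists x => k; have [_ _] := hnext (k, s k); apply; exact: (xs k.+1).
Qed.

Lemma not_premetric_nplicate_cantor (R : realType) (m : nat) :
  ~ premetric_le R (nplicate m.+1 cantor_space) m.
Proof.
move=> [M [f [hM _ cf _ fibre_le]]].
pose B k := [set y | exists i, ~ ball (f (y, ord0)) k.+1%:R^-1 (f (y, i))].
have [x xB] : exists x, forall k, ~ B k x.
  apply: cantor_avoid => k w.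
  have k_pos : 0 < k.+1%:R^-1 :> R by rewrite invr_gt0 ltr0n.
  have [W nW Wball] := nplicate_continuous_ball (w : cantor_space) cf k_pos.
  have [L LW] := cantor_nbhs_prefix nW.
  exists L => y yw yneq [i nb]; exact: nb (Wball y (LW y yw) yneq i).
have fx i : f (x, i) = f (x, ord0).
  apply/esym/(close_eq hM); rewrite ball_close => e.
  have [k _ /(_ k (leqnn k)) ke] := near_infty_natSinv_lt e.
  apply: (le_ball (ltW ke)); apply: contrapT => nb; apply: (xB k).
  by exists i.
by have := card_le_trans (nplicate_fibre_card fx) (fibre_le _); rewrite card_le_II ltnn.
Qed.

Lemma compact_injective_open_image (K Y : topologicalType) (e : K -> Y) :
  compact [set: K] -> hausdorff_space Y -> continuous e -> injective e ->
  forall U : set K, open U ->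
    exists V : set Y, open V /\ e @` U = range e `&` V.
Proof.
move=> cK hY ce ie U oU; exists (~` (e @` ~` U)); split.
  apply/closed_openC/(compact_closed hY)/continuous_compact.
    exact: continuous_subspaceT.
  by apply: subclosed_compact cK _ => //; exact: open_closedC.
apply/seteqP; split.
  by move=> _ [p Up <-]; split; [exists p|move=> [q nUq /ie qp]; apply: nUq; rewrite qp].
move=> _ [[p _ <-] nUe]; exists p => //.
by apply: contrapT => nUp; apply: nUe; exists p.
Qed.

Definition baire_of_cantor (x : cantor_space) : baire_space :=
  fun k => nat_of_bool (x k).

Lemma baire_of_cantor_inj : injective baire_of_cantor.
Proof.
move=> x y /(congr1 (fun t => t _)) xy; apply/funext => k.
by have := xy k; rewrite /baire_of_cantor; case: (x k); case: (y k).
Qed.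

Lemma baire_neq_coord (t u : baire_space) : t <> u -> exists k, t k <> u k.
Proof. by move=> tu; apply/existsNP => tEu; apply/tu/funext. Qed.

Lemma nbhs_cantor_coord (x : cantor_space) (k : nat) :
  nbhs x [set y : cantor_space | y k = x k].
Proof. exact: (@proj_continuous nat (fun _ => bool) k x _ (discrete_set1 (x k))). Qed.

Lemma nbhs_cantor_not_coded (t : baire_space) (x : cantor_space) :
  nbhs x [set y | y <> x -> t <> baire_of_cantor y].
Proof.
have [->|/baire_neq_coord[k tk]] := pselect (t = baire_of_cantor x).
  by apply: filterS filterT => y _ yx /baire_of_cantor_inj/esym.
apply: filterS (nbhs_cantor_coord x k) => y yk _ ty.
by apply: tk; rewrite ty /baire_of_cantor yk.
Qed.

Section RosenthalEmbedding.
Variables (R : realType) (m : nat).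
Local Notation D := (nplicate m.+1 cantor_space).

(* The first summand separates points of the base; the second vanishes at t
   unless t codes x, which gives continuity at (x, 0). *)
Definition rosenthal_embedding (p : D) : {ptws baire_space -> R} := fun t =>
  (p.1 (t 0%N) : nat)%:R + (if `[< t = baire_of_cantor p.1 >] then (p.2 : nat)%:R else 0).

Lemma rosenthal_embedding_continuous_at (t : baire_space) :
  continuous (fun p : D => rosenthal_embedding p t).
Proof.
apply: nplicate_continuous; first exact: cantor_space_hausdorff.
move=> x V nV; exists ([set y | y (t 0%N) = x (t 0%N)] `&`
                      [set y | y <> x -> t <> baire_of_cantor y]).
  exact: filterI (nbhs_cantor_coord _ _) (nbhs_cantor_not_coded _ _).
have at_base y (j : 'I_m.+1) :
    (if `[< t = baire_of_cantor y >] then (j : nat)%:R else 0 : R) = 0 ->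
    rosenthal_embedding (y, j) t = (y (t 0%N) : nat)%:R.
  by rewrite /rosenthal_embedding /= => ->; rewrite addr0.
move=> y j [/= yt0 ynot] yj.
have -> : rosenthal_embedding (y, j) t = rosenthal_embedding (x, ord0) t.
  rewrite !at_base ?yt0 ?if_same //.
  case: yj => [yx|->]; last by rewrite if_same.
  by rewrite asboolF //; exact: ynot.
exact: nbhs_singleton nV.
Qed.

Lemma rosenthal_embedding_continuous : continuous rosenthal_embedding.
Proof.
move=> p; have pF : Filter (rosenthal_embedding @ nbhs p) by exact: fmap_filter.
apply/(pointwise_cvgP _ pF) => t.
exact: rosenthal_embedding_continuous_at.
Qed.

Lemma rosenthal_embedding_inj : injective rosenthal_embedding.
Proof.
move=> [x i] [y j] /= exy.
have xy : x = y.
  (* t = (k, 2, 2, ...) codes no point of the Cantor set, so at t only the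
     first summand survives and it reads off the k-th bit. *)
  apply/funext => k; pose t : baire_space := fun l => if l == 0%N then k else 2%N.
  have uncoded z : t <> baire_of_cantor z.
    by move=> /(congr1 (fun u => u 1%N)); rewrite /t /baire_of_cantor; case: (z 1%N).
  have := congr1 (fun g => g t) exy; rewrite /rosenthal_embedding /= !asboolF // !addr0.
  by move/eqP; rewrite eqr_nat; case: (x k); case: (y k).
subst y; congr (_, _); apply: ord_inj.
have := congr1 (fun g => g (baire_of_cantor x)) exy.
by rewrite /rosenthal_embedding /= !asboolT // => /addrI/eqP; rewrite eqr_nat => /eqP.
Qed.

Lemma rosenthal_embedding_baire_class1 (p : D) :
  baire_class1 (rosenthal_embedding p : baire_space -> R).
Proof.
pose g k (t : baire_space) : R := (p.1 (t 0%N) : nat)%:R +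
  (if `[< prefix_eq k t (baire_of_cantor p.1) >] then (p.2 : nat)%:R else 0).
exists g; split.
  move=> k t; apply: (near_cst_continuous (g k t)).
  apply: filterS (nbhs_baire_prefix t k.+1) => s st.
  rewrite /g (st 0%N) //.
  suff -> : prefix_eq k s (baire_of_cantor p.1) = prefix_eq k t (baire_of_cantor p.1) by [].
  by apply/propext; split => coded j jk; rewrite -coded ?(st j (ltnW jk)).
move=> t; apply: cvg_near_cst.
have [tx|/baire_neq_coord[k tk]] := pselect (t = baire_of_cantor p.1).
  by exists 0%N => // k _; rewrite /g /rosenthal_embedding /= !asboolT // tx.
exists k.+1 => // l /= kl.
have t_uncoded : t <> baire_of_cantor p.1 by move=> tx; apply: tk; rewrite tx.
have t_off_prefix : ~ prefix_eq l t (baire_of_cantor p.1) by move/(_ k kl).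
by rewrite /g /rosenthal_embedding /= !asboolF.
Qed.

Lemma rosenthal_nplicate_cantor : rosenthal_compactum R D.
Proof.
have cD : compact [set: D] := nplicate_compact cantor_space_compact.
have hP : hausdorff_space {ptws baire_space -> R}.
  by apply: hausdorff_product => _; exact: Rhausdorff.
exists rosenthal_embedding; split.
- exact: rosenthal_embedding_inj.
- exact: rosenthal_embedding_continuous.
- exact: compact_injective_open_image hP
    rosenthal_embedding_continuous rosenthal_embedding_inj.
- by apply: continuous_compact cD; exact: continuous_subspaceT rosenthal_embedding_continuous.
- exact: rosenthal_embedding_baire_class1.
Qed.

End RosenthalEmbedding.

Theorem mainTheorem8 (R : realType) (n : nat) : (2 <= n)%N ->
  [/\ rosenthal_compactum R (nplicate n cantor_space),
      premetric_le R (nplicate n cantor_space) n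
    & ~ premetric_le R (nplicate n cantor_space) n.-1].
Proof.
case: n => [|m] // _; split.
- exact: rosenthal_nplicate_cantor.
- exact/nplicate_premetric/cantor_space_compact/cantor_space_hausdorff.
- exact: not_premetric_nplicate_cantor.
Qed.
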